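(* Let $H$ and $G$ be finitely generated groups with $H<G$. Suppose some connected component of $\Gamma_m(H)$ has exponential growth, and let $S\in\Gamma_n(G)$ be a generating $n$-tuple of $G$. Then $\Gamma_{n+m}(G,S)$ has exponential growth. In particular, if $H<G$ and $H$ has exponential Nielsen growth, then $G$ also has exponential Nielsen growth.
   Context: For a group $G$, a generating $n$-tuple is $(g_1,\dots,g_n)\in G^n$ with $G=\langle g_1,\dots,g_n\rangle$. The product replacement graph $\Gamma_n(G)$ has vertices the generating $n$-tuples, with edges from $(g_1,\dots,g_n)$ to each tuple obtained by replacing $g_j$ by $g_jg_i^{\pm1}$ or $g_i^{\pm1}g_j$, for every ordered pair $i\neq j$. For $S=(g_1,\dots,g_n)\in\Gamma_n(G)$ and $m\ge0$, $S^{(m)}=(g_1,\dots,g_n,1,\dots,1)\in\Gamma_{n+m}(G)$ ($m$ trailing identities) and $\Gamma_{n+m}(G,S)$ is the connected component of $\Gamma_{n+m}(G)$ containing $S^{(m)}$. For a graph $\Gamma$ and vertex $v$, $B_\Gamma(v,r)$ is the set of vertices at path distance at most $r$ from $v$; a graph has exponential growth from $v$ if $|B_\Gamma(v,r)|\ge\alpha^r$ for some $\alpha>1$ and all sufficiently large $r$; a connected graph has exponential growth if it has exponential growth from some (equivalently every) vertex. $G$ has exponential Nielsen growth if $\Gamma_n(G,S)$ has exponential growth for some $n$ and some generating $n$-tuple $S$. *)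

From Stdlib Require Import Reals List Arith.
Import ListNotations.
Open Scope R_scope.

Record Group := {
  carrier :> Type;
  gmul : carrier -> carrier -> carrier;
  gone : carrier;
  ginv : carrier -> carrier;
  gmulA : forall x y z, gmul x (gmul y z) = gmul (gmul x y) z;
  gmul1l : forall x, gmul gone x = x;
  gmul1r : forall x, gmul x gone = x;
  gmulVl : forall x, gmul (ginv x) x = gone;
  gmulVr : forall x, gmul x (ginv x) = gone
}.

Arguments gmul {g}.
Arguments gone {g}.
Arguments ginv {g}.

Section Defs.
Variable G : Group.

Definition is_subgroup (K : G -> Prop) : Prop :=
  K gone /\ (forall x y, K x -> K y -> K (gmul x y)) /\ (forall x, K x -> K (ginv x)).

Inductive in_gen (A : G -> Prop) : G -> Prop :=
  | gen_base x : A x -> in_gen A x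
  | gen_one : in_gen A gone
  | gen_mul x y : in_gen A x -> in_gen A y -> in_gen A (gmul x y)
  | gen_inv x : in_gen A x -> in_gen A (ginv x).

Definition gen_tuple (K : G -> Prop) (n : nat) (l : list G) : Prop :=
  length l = n /\ forall x, K x <-> in_gen (fun y => In y l) x.

Definition fin_gen (K : G -> Prop) : Prop := exists n l, gen_tuple K n l.

Fixpoint set_nth (l : list G) (j : nat) (x : G) : list G :=
  match l, j with
  | [], _ => []
  | _ :: t, O => x :: t
  | h :: t, S j' => h :: set_nth t j' x
  end.

Definition nielsen_move (l l' : list G) : Prop :=
  exists i j, (i <> j)%nat /\ (i < length l)%nat /\ (j < length l)%nat /\
    let gi := nth i l gone in let gj := nth j l gone in
    (l' = set_nth l j (gmul gj gi) \/ l' = set_nth l j (gmul gj (ginv gi)) \/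
     l' = set_nth l j (gmul gi gj) \/ l' = set_nth l j (gmul (ginv gi) gj)).

Definition pr_edge (K : G -> Prop) (n : nat) (u w : list G) : Prop :=
  gen_tuple K n u /\ gen_tuple K n w /\ nielsen_move u w.

Inductive within (K : G -> Prop) (n : nat) (v : list G) : nat -> list G -> Prop :=
  | within0 : gen_tuple K n v -> within K n v 0 v
  | withinS r w : within K n v r w -> within K n v (S r) w
  | within_step r u w : within K n v r u -> pr_edge K n u w -> within K n v (S r) w.

Definition ball (K : G -> Prop) (n : nat) (v : list G) (r : nat) : list G -> Prop :=
  fun w => within K n v r w.

Definition connected (K : G -> Prop) (n : nat) (v w : list G) : Prop :=
  exists r, within K n v r w.

End Defs.

Definition card_ge {T : Type} (A : T -> Prop) (k : nat) : Prop :=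
  exists l : list T, NoDup l /\ length l = k /\ forall x, In x l -> A x.

Definition card_ge_real {T : Type} (A : T -> Prop) (a : R) : Prop :=
  exists k : nat, INR k >= a /\ card_ge A k.

Definition exp_growth_from (G : Group) (K : G -> Prop) (n : nat) (v : list G) : Prop :=
  gen_tuple G K n v /\
  exists alpha : R, alpha > 1 /\ exists r0 : nat,
    forall r : nat, (r >= r0)%nat -> card_ge_real (ball G K n v r) (alpha ^ r).

Definition comp_exp_growth (G : Group) (K : G -> Prop) (n : nat) (v : list G) : Prop :=
  exists w, connected G K n v w /\ exp_growth_from G K n w.

Definition pad (G : Group) (S : list G) (m : nat) : list G := S ++ repeat gone m.

Definition exp_nielsen_growth (G : Group) (K : G -> Prop) : Prop :=
  exists n S, gen_tuple G K n S /\ comp_exp_growth G K n S.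

Definition whole (G : Group) : G -> Prop := fun _ => True.

(* Prefixing a generating tuple S of G turns every m-tuple w of H into a
   generating (n+m)-tuple S ++ w of G, and every Nielsen move of w into a move
   of S ++ w; so the ball of radius r about w in Gamma_m(H) injects into the
   ball of radius r about S ++ w in Gamma_(n+m)(G), and exponential growth is
   inherited.  It remains to see that S ++ w lies in the component of
   S ++ 1^m: since S generates G, any entry of the padding can be multiplied on
   the right by any element of G, one generator (or inverse) at a time, so each
   identity can be turned into the corresponding entry of w. *)

From Stdlib Require Import Reals List Arith Lia FinFun.
Import ListNotations.

Section GroupFacts.
Variable G : Group.

Lemma ginv_unique (x y : G) : gmul x y = gone -> y = ginv x.
Proof.
  intros Hxy.
  rewrite <- (gmul1l G y), <- (gmulVl G x), <- gmulA, Hxy, gmul1r.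
  reflexivity.
Qed.

Lemma ginvK (x : G) : ginv (ginv x) = x.
Proof. symmetry; apply ginv_unique, gmulVl. Qed.

Lemma ginv1 : ginv (gone : G) = gone.
Proof. symmetry; apply ginv_unique, gmul1l. Qed.

Lemma ginvM (x y : G) : ginv (gmul x y) = gmul (ginv y) (ginv x).
Proof.
  symmetry; apply ginv_unique.
  rewrite gmulA, <- (gmulA _ x y), gmulVr, gmul1r, gmulVr.
  reflexivity.
Qed.

Lemma in_gen_mono (A B : G -> Prop) x :
  (forall y, A y -> B y) -> in_gen G A x -> in_gen G B x.
Proof.
  intros HAB Hx; induction Hx.
  - apply gen_base; auto.
  - apply gen_one.
  - apply gen_mul; auto.
  - apply gen_inv; auto.
Qed.

End GroupFacts.

Section SetNth.
Variable G : Group.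
Local Open Scope nat_scope.

Lemma length_set_nth (l : list G) j x : length (set_nth G l j x) = length l.
Proof. revert j; induction l; intros [|j]; simpl; auto. Qed.

Lemma set_nth_app_r (S u : list G) j x :
  set_nth G (S ++ u) (length S + j) x = S ++ set_nth G u j x.
Proof. induction S as [|a S IH]; simpl; congruence. Qed.

Lemma set_nth_middle (p t : list G) y x :
  set_nth G (p ++ y :: t) (length p) x = p ++ x :: t.
Proof. induction p as [|a p IH]; simpl; congruence. Qed.

Lemma set_nth_id (l : list G) j d : set_nth G l j (nth j l d) = l.
Proof. revert j; induction l as [|a l IH]; intros [|j]; simpl; congruence. Qed.

Lemma set_nth_set_nth (l : list G) j x y :
  set_nth G (set_nth G l j x) j y = set_nth G l j y.
Proof. revert j; induction l as [|a l IH]; intros [|j]; simpl; congruence. Qed.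

Lemma nth_set_nth_eq (l : list G) j x d :
  j < length l -> nth j (set_nth G l j x) d = x.
Proof.
  revert j; induction l as [|a l IH]; intros [|j] Hj; simpl in *; try lia; auto.
  apply IH; lia.
Qed.

End SetNth.

Lemma card_ge_image {T U : Type} (A : T -> Prop) (B : U -> Prop) (f : T -> U) k :
  Injective f -> (forall x, A x -> B (f x)) -> card_ge A k -> card_ge B k.
Proof.
  intros Hf HAB [l [Hnd [Hl Hin]]].
  exists (map f l); repeat split.
  - apply Injective_map_NoDup; auto.
  - rewrite length_map; auto.
  - intros y Hy; apply in_map_iff in Hy as [x [<- Hx]]; auto.
Qed.

Section Prefix.
Variables (G : Group) (n : nat) (S : list G).
Hypothesis HS : gen_tuple G (whole G) n S.
Local Open Scope nat_scope.

Lemma gen_tuple_app_l m (u : list G) :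
  length u = m -> gen_tuple G (whole G) (n + m) (S ++ u).
Proof.
  destruct HS as [HlS HgS]; intros Hu; split.
  - rewrite length_app; lia.
  - intros x; split; intros _; [|exact I].
    apply (in_gen_mono G (fun y => In y S)).
    + intros y Hy; apply in_or_app; auto.
    + apply HgS; exact I.
Qed.

Lemma nielsen_move_app_l (u u' : list G) :
  nielsen_move G u u' -> nielsen_move G (S ++ u) (S ++ u').
Proof.
  intros [i [j [Hij [Hi [Hj Hmove]]]]].
  exists (length S + i), (length S + j); rewrite length_app.
  repeat split; try lia; cbv zeta in *.
  rewrite !app_nth2_plus, !set_nth_app_r.
  destruct Hmove as [-> | [-> | [-> | ->]]]; auto.
Qed.

Lemma pr_edge_app_l (K : G -> Prop) m (u w : list G) :
  pr_edge G K m u w -> pr_edge G (whole G) (n + m) (S ++ u) (S ++ w).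
Proof.
  intros [[Hu _] [[Hw _] Hmove]].
  split; [|split]; auto using gen_tuple_app_l, nielsen_move_app_l.
Qed.

Lemma within_app_l (K : G -> Prop) m (v w : list G) r :
  within G K m v r w -> within G (whole G) (n + m) (S ++ v) r (S ++ w).
Proof.
  induction 1 as [[Hv _]| |r u w _ IH Hedge].
  - apply within0, gen_tuple_app_l; auto.
  - apply withinS; auto.
  - eapply within_step; eauto using pr_edge_app_l.
Qed.

Lemma exp_growth_from_app_l (K : G -> Prop) m (w : list G) :
  exp_growth_from G K m w -> exp_growth_from G (whole G) (n + m) (S ++ w).
Proof.
  intros [[Hw _] [alpha [Halpha [r0 Hball]]]]; split.
  - apply gen_tuple_app_l; auto.
  - exists alpha; split; auto; exists r0; intros r Hr.
    destruct (Hball r Hr) as [k [Hk Hcard]].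
    exists k; split; auto.
    apply (card_ge_image (ball G K m w r) _ (app S)); auto.
    + intros a b; apply app_inv_head.
    + intros x Hx; apply (within_app_l K); auto.
Qed.

Section Component.
Variable m : nat.

Let component (T : list G) : Prop :=
  connected G (whole G) (n + m) (pad G S m) T.

Lemma component_pad : component (pad G S m).
Proof. exists 0; apply within0, gen_tuple_app_l, repeat_length. Qed.

Lemma component_move (u u' : list G) :
  length u = m -> length u' = m ->
  component (S ++ u) -> nielsen_move G (S ++ u) (S ++ u') -> component (S ++ u').
Proof.
  intros Hu Hu' [r Hr] Hmove; exists (Datatypes.S r).
  eapply within_step; eauto.
  split; [|split]; auto using gen_tuple_app_l.
Qed.

(* Both signs are carried along because the induction passes through inverses. *)
Lemma component_mul_entry x :
  in_gen G (fun y => In y S) x ->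
  forall u j, j < length u -> length u = m -> component (S ++ u) ->
    component (S ++ set_nth G u j (gmul (nth j u gone) x)) /\
    component (S ++ set_nth G u j (gmul (nth j u gone) (ginv x))).
Proof.
  induction 1 as [x HxS| |x y _ IHx _ IHy|x _ IHx]; intros u j Hj Hu Hcomp.
  - destruct (In_nth _ _ gone HxS) as [i [Hi Hix]].
    assert (Hlen : forall z, length (set_nth G u j z) = m)
      by (intros; rewrite length_set_nth; auto).
    assert (Hmove : forall z, z = x \/ z = ginv x ->
              component (S ++ set_nth G u j (gmul (nth j u gone) z))).
    { intros z Hz; apply (component_move u); auto.
      exists i, (length S + j); rewrite length_app.
      repeat split; try lia; cbv zeta.
      rewrite (app_nth1 S u gone Hi), app_nth2_plus, Hix, !set_nth_app_r.
      destruct Hz as [->| ->]; auto. }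
    split; apply Hmove; auto.
  - rewrite ginv1, gmul1r, set_nth_id; auto.
  - set (c := nth j u gone).
    assert (Hlen : forall z, length (set_nth G u j z) = length u)
      by (intros; apply length_set_nth).
    destruct (IHx u j Hj Hu Hcomp) as [Hx _].
    destruct (IHy u j Hj Hu Hcomp) as [_ Hy'].
    destruct (IHy (set_nth G u j (gmul c x)) j) as [Hxy _];
      [rewrite Hlen; auto | rewrite Hlen; auto | exact Hx |].
    destruct (IHx (set_nth G u j (gmul c (ginv y))) j) as [_ Hyx];
      [rewrite Hlen; auto | rewrite Hlen; auto | exact Hy' |].
    rewrite nth_set_nth_eq, set_nth_set_nth, <- gmulA in Hxy, Hyx by auto.
    rewrite ginvM; auto.
  - destruct (IHx u j Hj Hu Hcomp) as [Hx Hx'].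
    rewrite ginvK; auto.
Qed.

Lemma component_fill (q p : list G) :
  length p + length q = m ->
  component (S ++ p ++ repeat gone (length q)) -> component (S ++ p ++ q).
Proof.
  revert p; induction q as [|a q IH]; intros p Hlen Hcomp; simpl in *; auto.
  replace (p ++ a :: q) with ((p ++ [a]) ++ q) by (rewrite <- app_assoc; auto).
  apply IH; [rewrite length_app; simpl; lia|].
  rewrite <- app_assoc; simpl.
  set (u := p ++ gone :: repeat gone (length q)).
  assert (Hu : length u = m)
    by (unfold u; rewrite length_app; simpl; rewrite repeat_length; lia).
  destruct (component_mul_entry a) with (u := u) (j := length p) as [Ha _]; auto.
  - apply (proj2 HS a); exact I.
  - rewrite Hu; lia.
  - unfold u in Ha; rewrite nth_middle, gmul1l, set_nth_middle in Ha; exact Ha.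
Qed.

Lemma component_app_l (w : list G) : length w = m -> component (S ++ w).
Proof.
  intros Hw; apply (component_fill w []); auto.
  rewrite Hw; apply component_pad.
Qed.

End Component.

Lemma comp_exp_growth_pad (K : G -> Prop) m (v : list G) :
  comp_exp_growth G K m v -> comp_exp_growth G (whole G) (n + m) (pad G S m).
Proof.
  intros [w [_ Hgrowth]].
  exists (S ++ w); split.
  - apply component_app_l, (proj1 (proj1 Hgrowth)).
  - apply (exp_growth_from_app_l K); auto.
Qed.

End Prefix.

Theorem proposition3p4 (G : Group) (H : G -> Prop) :
  is_subgroup G H -> fin_gen G H -> fin_gen G (whole G) ->
  (forall (m n : nat) (v S : list G),
      gen_tuple G H m v -> comp_exp_growth G H m v ->
      gen_tuple G (whole G) n S ->
      comp_exp_growth G (whole G) (n + m) (pad G S m)) /\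
  (exp_nielsen_growth G H -> exp_nielsen_growth G (whole G)).
Proof.
  intros _ _ [n0 [S0 HS0]]; split.
  - intros m n v S _ Hgrowth HS.
    apply (comp_exp_growth_pad G n S HS H m v Hgrowth).
  - intros [m [v [_ Hgrowth]]].
    exists (n0 + m)%nat, (pad G S0 m); split.
    + apply gen_tuple_app_l; auto using repeat_length.
    + apply (comp_exp_growth_pad G n0 S0 HS0 H m v Hgrowth).
Qed.
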